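(* Let $G$ be a weighted graph as in the context. For every integer $m\geq 1$, \[q_{2m}^G(\rho)\leq\frac{3h_G^{-1}(m)}{m},\] where $\rho=\rho(G)$.
   Context: $G$ is a locally finite connected graph with at least two vertices, vertex set $V(G)$ and distinguished vertex $\rho=\rho(G)$; $\mu^G$ is a symmetric weight with $\mu^G_{xy}>0$ iff $\{x,y\}$ is an edge, $\mu^G_x:=\sum_y\mu^G_{xy}$, $\nu^G(A):=\sum_{x\in A}\mu^G_x$. The discrete time simple random walk $X^G$ has transition probabilities $P_G(x,y)=\mu^G_{xy}/\mu^G_x$ and law $\mathbf{P}^G_x$; $p^G_m(x,y):=\mathbf{P}^G_x(X^G_m=y)/\nu^G(\{y\})$, $q^G_m(x,y):=\frac12(p^G_m(x,y)+p^G_{m+1}(x,y))$, $q^G_m(x):=q^G_m(\rho,x)$. The generator is $\mathcal{L}_Gf(x)=\sum_yP_G(x,y)(f(y)-f(x))$, $(f,g)_G:=\sum_xf(x)g(x)\nu^G(\{x\})$, $\mathcal{E}_G(f,g):=-(\mathcal{L}_Gf,g)_G$, $\mathcal{F}_G:=\{f:\mathcal{E}_G(f,f)<\infty\}$. The resistance metric is \[R_G(x,y):=\sup\left\{\frac{|f(x)-f(y)|^2}{\mathcal{E}_G(f,f)}:f\in\mathcal{F}_G,\ \mathcal{E}_G(f,f)>0\right\}.\] Set $V_G(r):=\nu^G(\{x:R_G(\rho,x)\le r\})$, $h_G(r):=rV_G(r)$, and $h_G^{-1}(m):=\sup\{r:h_G(r)\le m\}$. *)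

From HB Require Import structures.
From mathcomp Require Import all_boot all_order all_algebra.
From mathcomp Require Import all_classical all_reals all_analysis.
Set Implicit Arguments. Unset Strict Implicit. Unset Printing Implicit Defensive.
Import Order.TTheory GRing.Theory Num.Theory.
Local Open Scope classical_set_scope.
Local Open Scope ring_scope.

Section WeightedGraph.
Variables (R : realType) (V : choiceType) (mu : V -> V -> R).

Definition adj (x y : V) : bool := 0 < mu x y.

Definition weighted_graph : Prop :=
  [/\ (forall x y, mu x y = mu y x),
      (forall x y, 0 <= mu x y),
      (forall x, mu x x = 0),
      (forall x, finite_set [set y | adj x y])
    & (forall x y, exists s : seq V, path adj x s /\ last x s = y)].

(* mu_x = sum_y mu_xy (a finite sum by local finiteness) *)
Definition muv (x : V) : R := fine (\esum_(y in setT) (mu x y)%:E).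

Definition nu (A : set V) : \bar R := \esum_(x in A) (muv x)%:E.

Definition Ptrans (x y : V) : R := mu x y / muv x.

Fixpoint Pstep (m : nat) (x y : V) : R :=
  match m with
  | 0%N => if x == y then 1 else 0
  | m'.+1 => fine (\esum_(z in setT) (Ptrans x z * Pstep m' z y)%:E)
  end.

Definition pker (m : nat) (x y : V) : R := Pstep m x y / fine (nu [set y]).

Definition qker (m : nat) (x y : V) : R := 2^-1 * (pker m x y + pker m.+1 x y).

Definition energy (f : V -> R) : \bar R :=
  (2^-1)%:E * \esum_(p in setT) (mu p.1 p.2 * (f p.1 - f p.2) ^+ 2)%:E.

Definition resist (x y : V) : \bar R :=
  ereal_sup [set (`|f x - f y| ^+ 2 / fine (energy f))%:E | f in
              [set f : V -> R | (energy f < +oo)%E /\ (0 < energy f)%E]].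

Definition Vball (rho : V) (r : R) : \bar R :=
  nu [set x | (resist rho x <= r%:E)%E].

Definition hfun (rho : V) (r : R) : \bar R := (r%:E * Vball rho r)%E.

Definition hinv (rho : V) (m : R) : \bar R :=
  ereal_sup [set r%:E | r in [set r : R | (hfun rho r <= m%:E)%E]].

End WeightedGraph.

From HB Require Import structures.
From mathcomp Require Import all_boot all_order all_algebra.
From mathcomp Require Import finmap.
From mathcomp Require Import all_classical all_reals all_analysis.
From mathcomp.algebra_tactics Require Import ring lra.
From mathcomp Require Import zify.
Set Implicit Arguments. Unset Strict Implicit. Unset Printing Implicit Defensive.
Import Order.TTheory GRing.Theory Num.Theory.
Local Open Scope classical_set_scope.
Local Open Scope ring_scope.

(* Let u_n := p_n(., rho) and w_n := u_n(rho), so that q_(2m)(rho) = (w_(2m) + w_(2m+1)) / 2.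
   Reversibility gives <u_a, u_b> = w_(a+b) and E(u_a, u_b) = w_(a+b) - w_(a+b+1); positivity
   of the energy of u_j + u_(j+1) then shows that the pair sums w_(2j) + w_(2j+1) decrease.
   Hence the average f of the u_n over the indices 2(m - m/2) <= n < 2m + 2 satisfies
   f(rho) >= q_(2m)(rho), has total mass 1 and energy E(f) <= q_(2m)(rho) / m.  By definition
   of the resistance, f >= f(rho) - sqrt(r E(f)) on the resistance ball of radius r, whose
   volume is therefore at most 1 / (f(rho) - sqrt(r E(f))).  When r > h^-1(m), i.e. r V(r) > m,
   this yields q - sqrt(r q / m) <= r / m, and that quadratic inequality forces q <= 3 r / m. *)

Section PairSums.
Variable R : realFieldType.
Implicit Types w : nat -> R.

Definition pair_sum w j := w (2 * j)%N + w (2 * j).+1.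

Lemma sum_window_pairs w a K :
  \sum_(i < 2 * K) w (2 * a + i)%N = \sum_(j < K) pair_sum w (a + j).
Proof.
elim: K => [|K IH]; first by rewrite !big_ord0.
rewrite (_ : 2 * K.+1 = (2 * K).+2)%N; last by lia.
by rewrite !big_ord_recr /= IH /pair_sum mulnDr addnS addrA.
Qed.

Lemma sum_telescope_le w c L : (forall n, 0 <= w n) ->
  \sum_(j < L) (w (c + j)%N - w (c + j).+1) <= w c.
Proof.
move=> w_ge0; suff -> : \sum_(j < L) (w (c + j)%N - w (c + j).+1) = w c - w (c + L)%N.
  by rewrite lerBlDr lerDl.
elim: L => [|L IH]; first by rewrite big_ord0 addn0 subrr.
by rewrite big_ord_recr /= IH addnS addrA subrK.
Qed.

Variables (w : nat -> R) (n : nat).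
Hypothesis pair_sum_decr : forall j, (j < n)%N -> pair_sum w j.+1 <= pair_sum w j.

Lemma pair_sum_le a b : (a <= b <= n)%N -> pair_sum w b <= pair_sum w a.
Proof.
case/andP=> le_ab; rewrite -(subnK le_ab); elim: (b - a)%N => [|k IH] le_n //.
by rewrite addSn in le_n *; apply: le_trans (pair_sum_decr le_n) (IH (ltnW le_n)).
Qed.

Lemma window_sum_ge a K m : (m <= n)%N -> (a + K <= m.+1)%N ->
  K%:R * pair_sum w m <= \sum_(i < 2 * K) w (2 * a + i)%N.
Proof.
move=> le_mn le_aK; rewrite sum_window_pairs mulr_natl -[X in _ *+ X]card_ord -sumr_const.
apply: ler_sum => j _; apply: pair_sum_le; have := ltn_ord j; lia.
Qed.

Lemma window_sum_le b K m : (m <= b)%N -> (b + K <= n.+1)%N ->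
  \sum_(i < 2 * K) w (2 * b + i)%N <= K%:R * pair_sum w m.
Proof.
move=> le_mb le_bK; rewrite sum_window_pairs mulr_natl -[X in _ *+ X]card_ord -sumr_const.
apply: ler_sum => j _; apply: pair_sum_le; have := ltn_ord j; lia.
Qed.

Lemma window_telescope_le b K m : (forall k, 0 <= w k) ->
  (m <= b)%N -> (b + K <= n.+1)%N ->
  \sum_(i < 2 * K) \sum_(j < 2 * K) (w (b + i + (b + j))%N - w (b + i + (b + j)).+1)
    <= K%:R * pair_sum w m.
Proof.
move=> w_ge0 le_mb le_bK; apply: le_trans (window_sum_le le_mb le_bK).
apply: ler_sum => i _; under eq_bigr => j _ do rewrite addnA -(addnC b) addnA addnn -mul2n.
exact: sum_telescope_le.
Qed.

End PairSums.

Lemma double_half_bounds m : (2 * m./2 <= m <= 2 * m./2 + 1)%N.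
Proof.
have := odd_double_half m; rewrite -muln2.
by case: (odd m) => /= <-; lia.
Qed.

Lemma quadratic_bound (R : realFieldType) (a s t : R) : 0 < t ->
  a <= t + s -> s ^+ 2 <= t * a -> a <= 3 * t.
Proof.
move=> t_gt0 le_ats le_s2; have [le_at|lt_ta] := lerP a t; first by lra.
have : (a - t) ^+ 2 <= s ^+ 2 by rewrite ler_sqr ?nnegrE; lra.
have : 0 < t ^+ 2 by rewrite exprn_gt0.
rewrite !expr2; nra.
Qed.

Lemma esum_setT_fset (R : realType) (X : choiceType) (a : X -> R) (T : set X) :
  finite_set T -> (forall x, 0 <= a x) -> (forall x, ~ T x -> a x = 0) ->
  \esum_(x in [set: X]) (a x)%:E = (\sum_(x <- fset_set T) a x)%:E.
Proof.
move=> fin_T a_ge0 a_out.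
rewrite (_ : \esum_(x in setT) _ = \esum_(x in setT `&` T) (a x)%:E); last first.
  rewrite esum_mkcondr; apply: eq_esum => x _; case: ifPn => // /negP.
  by rewrite inE => /a_out ->.
rewrite setTI esum_fset //; last by move=> x _; rewrite lee_fin.
by rewrite fsbig_finite // sumEFin.
Qed.

Lemma esum_setT_eq0 (R : realType) (X : choiceType) (a : X -> R) :
  (forall x, 0 <= a x) -> \esum_(x in [set: X]) (a x)%:E = 0%E -> forall x, a x = 0.
Proof.
move=> a_ge0 sum0 x; apply/eqP; rewrite eq_le a_ge0 andbT.
have : ((a x)%:E <= \esum_(y in [set: X]) (a y)%:E)%E.
  apply: esum_ge; exists [set x]; first by split; [exact: finite_set1|].
  by rewrite fsbig_set1.
by rewrite sum0 lee_fin.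
Qed.

Lemma ler_sum_uniq_supp (R : numDomainType) (T : eqType) (F : T -> R) (A S : seq T) :
  uniq A -> uniq S -> (forall x, 0 <= F x) -> (forall x, x \notin S -> F x = 0) ->
  \sum_(x <- A) F x <= \sum_(x <- S) F x.
Proof.
move=> uA uS F_ge0 F_out.
rewrite (bigID (mem S)) /= [X in _ + X]big1 ?addr0; last by move=> x /F_out.
rewrite [X in _ <= X](bigID (mem A)) /=; apply: ler_wpDr; first exact: sumr_ge0.
have perm_AS : perm_eq [seq x <- A | x \in S] [seq x <- S | x \in A].
  by apply: uniq_perm; rewrite ?filter_uniq // => x; rewrite !mem_filter andbC.
by rewrite -[X in X <= _]big_filter -[X in _ <= X]big_filter (perm_big _ perm_AS) lexx.
Qed.

Section WeightedGraph.
Variables (R : realType) (V : choiceType) (mu : V -> V -> R) (rho : V).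
Hypothesis mu_graph : weighted_graph mu.
Hypothesis V_nontrivial : exists x y : V, x <> y.

Let mu_sym x y : mu x y = mu y x. Proof. by case: mu_graph. Qed.
Let mu_ge0 x y : 0 <= mu x y. Proof. by case: mu_graph. Qed.
Let adj_finite x : finite_set [set y | adj mu x y]. Proof. by case: mu_graph. Qed.
Let connected x y : exists s : seq V, path (adj mu) x s /\ last x s = y.
Proof. by case: mu_graph. Qed.

Lemma adj_sym x y : adj mu x y = adj mu y x.
Proof. by rewrite /adj mu_sym. Qed.

Lemma nadj_mu_eq0 x y : ~~ adj mu x y -> mu x y = 0.
Proof. by rewrite /adj -leNgt => h; apply/eqP; rewrite eq_le h mu_ge0. Qed.

Lemma muv_fset x (T : set V) : finite_set T -> [set y | adj mu x y] `<=` T ->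
  muv mu x = \sum_(y <- fset_set T) mu x y.
Proof.
move=> fin_T adj_T; rewrite /muv (@esum_setT_fset _ _ _ T) //= => y Ty.
by apply: nadj_mu_eq0; apply/negP => /adj_T.
Qed.

Lemma exists_adj x : exists y, adj mu x y.
Proof.
have [y xy] : exists y, x <> y.
  have [a [b ab]] := V_nontrivial; have [<-|ax] := eqVneq a x; first by exists b.
  by exists a => xa; rewrite xa eqxx in ax.
have [[|z s] [/= xs sy]] := connected x y; first by [].
by case/andP: xs => xz _; exists z.
Qed.

Lemma muv_gt0 x : 0 < muv mu x.
Proof.
have [z xz] := exists_adj x.
rewrite (@muv_fset x [set y | adj mu x y]) // (bigD1_seq z) //=.
  by rewrite ltr_wpDr // sumr_ge0.
by rewrite in_fset_set // inE.
Qed.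

Lemma Ptrans_ge0 x y : 0 <= Ptrans mu x y.
Proof. by rewrite /Ptrans divr_ge0 // ltW // muv_gt0. Qed.

Lemma Ptrans_muv x y : Ptrans mu x y * muv mu x = mu x y.
Proof. by rewrite /Ptrans divfK // gt_eqF // muv_gt0. Qed.

Lemma Ptrans_neq0_adj x y : Ptrans mu x y != 0 -> adj mu x y.
Proof.
apply: contraR => /nadj_mu_eq0 mu0.
by rewrite /Ptrans mu0 mul0r.
Qed.

Fixpoint ball n : set V :=
  if n is n'.+1 then ball n' `|` \bigcup_(y in ball n') [set x | adj mu y x]
  else [set rho].

Lemma ball_finite n : finite_set (ball n).
Proof.
elim: n => [|n IH] /=; first exact: finite_set1.
by rewrite finite_setU; split => //; apply: bigcup_finite => // y _; exact: adj_finite.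
Qed.

Lemma ball_mono n k : (n <= k)%N -> ball n `<=` ball k.
Proof.
move=> /subnK <-; elim: (k - n)%N => [|j IH] //.
by apply: subset_trans IH _; rewrite addSn => x; left.
Qed.

Lemma ball_adj n x y : ball n x -> adj mu x y -> ball n.+1 y.
Proof. by move=> Bx xy; right; exists x. Qed.

Lemma ball_center n : ball n rho.
Proof. exact: (@ball_mono 0 n (leq0n n)). Qed.

Lemma Pstep_ge0 n x y : 0 <= Pstep mu n x y.
Proof.
elim: n x => [|n IH] x /=; first by case: ifP.
by apply: fine_ge0; apply: esum_ge0 => z _; rewrite lee_fin mulr_ge0 // Ptrans_ge0.
Qed.

Lemma Pstep_neq0_ball n x : Pstep mu n x rho != 0 -> ball n x.
Proof.
elim: n x => [|n IH] x /=; first by case: (eqVneq x rho) => [-> //|_]; rewrite eqxx.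
have [[z]|all0] := pselect (exists z, Ptrans mu x z * Pstep mu n z rho != 0).
  rewrite mulf_eq0 negb_or => /andP[/Ptrans_neq0_adj xz /IH Bz] _.
  by apply: ball_adj Bz _; rewrite adj_sym.
rewrite esum1 ?eqxx // => z _; apply/eqP/negPn/negP => z_neq0.
by apply: all0; exists z.
Qed.

Lemma Pstep_succ_fset n x (T : set V) : finite_set T -> ball n `<=` T ->
  Pstep mu n.+1 x rho = \sum_(z <- fset_set T) Ptrans mu x z * Pstep mu n z rho.
Proof.
move=> fin_T ball_T; rewrite /= (@esum_setT_fset _ _ _ T) //.
  by move=> z; rewrite mulr_ge0 // ?Ptrans_ge0 ?Pstep_ge0.
move=> z Tz; have -> : Pstep mu n z rho = 0; last by rewrite mulr0.
by apply/eqP/negPn/negP => /Pstep_neq0_ball /ball_T.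
Qed.

Lemma energy_eq0_const g x y : energy mu g = 0%E -> g x = g y.
Proof.
move=> energy0.
have sum0 : \esum_(p in [set: V * V]) (mu p.1 p.2 * (g p.1 - g p.2) ^+ 2)%:E = 0%E.
  move: energy0; rewrite /energy => /eqP; rewrite mule_eq0 eqe invr_eq0 pnatr_eq0 /=.
  by move/eqP.
have adj_eq a b : adj mu a b -> g a = g b.
  move=> ab; have := esum_setT_eq0 _ sum0 (a, b).
  move=> /(_ (fun p => mulr_ge0 (mu_ge0 _ _) (sqr_ge0 _))) /eqP.
  by rewrite mulf_eq0 (gt_eqF ab) sqrf_eq0 subr_eq0 => /eqP.
have [s [xs <-]] := connected x y.
by elim: s x xs => [|b s IH] a //= /andP[ab bs]; rewrite (adj_eq a b ab) IH.
Qed.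

(* [heat n x] is p_n(x, rho). *)
Definition heat n x := Pstep mu n x rho / muv mu rho.

Lemma heat_ge0 n x : 0 <= heat n x.
Proof. by rewrite /heat divr_ge0 ?Pstep_ge0 // ltW // muv_gt0. Qed.

Lemma heat_neq0_ball n x : heat n x != 0 -> ball n x.
Proof.
move=> heat_neq0; apply: Pstep_neq0_ball; apply: contraNN heat_neq0 => /eqP.
by rewrite /heat => ->; rewrite mul0r.
Qed.

Definition window_avg N0 L x := L%:R^-1 * \sum_(i < L) heat (N0 + i) x.

Lemma window_avg_ge0 N0 L x : 0 <= window_avg N0 L x.
Proof. by rewrite mulr_ge0 ?invr_ge0 // sumr_ge0 // => i _; apply: heat_ge0. Qed.

Lemma window_avg_neq0_ball N0 L x : window_avg N0 L x != 0 -> ball (N0 + L) x.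
Proof.
apply: contra_neqP => notB; rewrite /window_avg big1 ?mulr0 // => i _.
apply: contra_not_eq notB => /heat_neq0_ball; apply: ball_mono.
by have := ltn_ord i; lia.
Qed.

Section Truncation.
Variable M : nat.

(* Inner product and transition operator truncated to [ball M]; nothing is lost for functions
   supported in [ball n] with n < M, which covers all functions used below. *)
Definition ball_enum : seq V := fset_set (ball M).

Lemma mem_ball_enum x : ball M x -> x \in ball_enum.
Proof. by move=> Bx; rewrite in_fset_set ?inE //; apply: ball_finite. Qed.

Definition inner (g h : V -> R) := \sum_(x <- ball_enum) g x * h x * muv mu x.
Definition Pmul (g : V -> R) x := \sum_(y <- ball_enum) Ptrans mu x y * g y.
Definition dform g h := inner g h - inner (Pmul g) h.

Lemma Pmul_heat n : (n <= M)%N -> Pmul (heat n) = heat n.+1.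
Proof.
move=> le_nM; apply/funext => x; rewrite /heat (@Pstep_succ_fset n x (ball M)).
- by rewrite mulr_suml /Pmul; apply: eq_bigr => y _; rewrite mulrA.
- exact: ball_finite.
- exact: ball_mono.
Qed.

Lemma inner_Pmul g h :
  inner (Pmul g) h = \sum_(x <- ball_enum) \sum_(y <- ball_enum) mu x y * g y * h x.
Proof.
apply: eq_bigr => x _; rewrite !mulr_suml.
by apply: eq_bigr => y _; rewrite -(Ptrans_muv x y); ring.
Qed.

Lemma inner_Pmul_sym g h : inner (Pmul g) h = inner g (Pmul h).
Proof.
rewrite inner_Pmul.
transitivity (\sum_(x <- ball_enum) \sum_(y <- ball_enum) mu y x * h y * g x).
  rewrite exchange_big; apply: eq_bigr => x _; apply: eq_bigr => y _.
  by rewrite mu_sym; ring.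
apply: eq_bigr => x _; rewrite mulr_sumr mulr_suml.
by apply: eq_bigr => y _; rewrite mu_sym -(Ptrans_muv x y); ring.
Qed.

Lemma inner_comm g h : inner g h = inner h g.
Proof. by apply: eq_bigr => x _; rewrite (mulrC (g x)). Qed.

Lemma inner_heat0 h : inner (heat 0) h = h rho.
Proof.
rewrite /inner (bigD1_seq rho) /=; last exact: fset_uniq.
  rewrite big1_seq ?addr0 => [|x /andP[x_neq _]].
    by rewrite /heat /= eqxx mul1r; field; rewrite gt_eqF // muv_gt0.
  by rewrite /heat /= (negPf x_neq) !mul0r.
exact/mem_ball_enum/ball_center.
Qed.

Lemma inner_heat a b : (a + b <= M)%N -> inner (heat a) (heat b) = heat (a + b) rho.
Proof.
elim: a b => [|a IH] b le_abM; first by rewrite inner_heat0.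
rewrite -Pmul_heat; last by lia.
by rewrite inner_Pmul_sym Pmul_heat ?IH ?addnS //; lia.
Qed.

Lemma inner_suml (k : R) L (g : nat -> V -> R) h :
  inner (fun x => k * \sum_(i < L) g i x) h = k * \sum_(i < L) inner (g i) h.
Proof.
rewrite /inner mulr_sumr.
transitivity (\sum_(x <- ball_enum) \sum_(i < L) k * (g i x * h x * muv mu x)).
  apply: eq_bigr => x _; rewrite mulr_sumr !mulr_suml.
  by apply: eq_bigr => i _; ring.
by rewrite exchange_big; apply: eq_bigr => i _; rewrite mulr_sumr.
Qed.

Lemma inner_sumr (k : R) L (g : nat -> V -> R) h :
  inner h (fun x => k * \sum_(i < L) g i x) = k * \sum_(i < L) inner h (g i).
Proof.
rewrite inner_comm inner_suml; congr (_ * _).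
by apply: eq_bigr => i _; rewrite inner_comm.
Qed.

Lemma Pmul_suml (k : R) L (g : nat -> V -> R) :
  Pmul (fun x => k * \sum_(i < L) g i x) = fun x => k * \sum_(i < L) Pmul (g i) x.
Proof.
apply/funext => x; rewrite /Pmul mulr_sumr.
transitivity (\sum_(y <- ball_enum) \sum_(i < L) k * (Ptrans mu x y * g i y)).
  apply: eq_bigr => y _; rewrite !mulr_sumr.
  by apply: eq_bigr => i _; ring.
by rewrite exchange_big; apply: eq_bigr => i _; rewrite mulr_sumr.
Qed.

Lemma dform_window_avg N0 L : (N0 + L + (N0 + L) <= M)%N ->
  dform (window_avg N0 L) (window_avg N0 L) = L%:R^-2 *
    \sum_(i < L) \sum_(j < L) (heat (N0 + i + (N0 + j)) rho - heat (N0 + i + (N0 + j)).+1 rho).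
Proof.
move=> le_M; rewrite /dform /window_avg (Pmul_suml _ _ (fun i => heat (N0 + i))).
have -> : (fun x => L%:R^-1 * \sum_(i < L) Pmul (heat (N0 + i)) x) =
          (fun x => L%:R^-1 * \sum_(i < L) heat (N0 + i).+1 x).
  apply/funext => x; congr (_ * _); apply: eq_bigr => i _.
  by rewrite Pmul_heat //; have := ltn_ord i; lia.
rewrite (inner_suml _ _ (fun i => heat (N0 + i))).
rewrite (inner_suml _ _ (fun i => heat (N0 + i).+1)).
rewrite -mulrBr -sumrB -exprVn expr2 -mulrA; congr (_ * _).
rewrite mulr_sumr; apply: eq_bigr => i _.
rewrite !(inner_sumr _ _ (fun j => heat (N0 + j))) -mulrBr -sumrB; congr (_ * _).
apply: eq_bigr => j _.
have lt_iL := ltn_ord i; have lt_jL := ltn_ord j.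
by rewrite !inner_heat ?addSn //; lia.
Qed.

Section Supported.
Variables (g : V -> R) (n : nat).
Hypothesis g_supp : forall x, g x != 0 -> ball n x.
Hypothesis lt_nM : (n < M)%N.

Lemma sum_mu_ball_enum x : g x != 0 -> \sum_(y <- ball_enum) mu x y = muv mu x.
Proof.
move=> /g_supp Bx; rewrite (@muv_fset x (ball M)) //; first exact: ball_finite.
by move=> y /(ball_adj Bx); apply: ball_mono.
Qed.

Lemma sum_mu_ball_enum_mulr x (c : R) :
  \sum_(y <- ball_enum) mu x y * (g x * c) = g x * c * muv mu x.
Proof.
have [->|gx_neq0] := eqVneq (g x) 0; first by rewrite !mul0r big1 // => y _; rewrite mulr0.
by rewrite -mulr_suml sum_mu_ball_enum // mulrC.
Qed.

Lemma dform_sqr :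
  2 * dform g g = \sum_(x <- ball_enum) \sum_(y <- ball_enum) mu x y * (g x - g y) ^+ 2.
Proof.
have sum_x : \sum_(x <- ball_enum) \sum_(y <- ball_enum) mu x y * g x ^+ 2 = inner g g.
  by apply: eq_bigr => x _; rewrite expr2 sum_mu_ball_enum_mulr.
have sum_y : \sum_(x <- ball_enum) \sum_(y <- ball_enum) mu x y * g y ^+ 2 = inner g g.
  rewrite exchange_big; apply: eq_bigr => y _.
  by under eq_bigr do rewrite mu_sym; rewrite expr2 sum_mu_ball_enum_mulr.
transitivity (\sum_(x <- ball_enum) \sum_(y <- ball_enum)
   (mu x y * g x ^+ 2 + mu x y * g y ^+ 2 - 2 * (mu x y * g y * g x))); last first.
  by apply: eq_bigr => x _; apply: eq_bigr => y _; ring.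
under eq_bigr do rewrite sumrB big_split /= -mulr_sumr.
by rewrite sumrB big_split /= -mulr_sumr sum_x sum_y -inner_Pmul /dform; ring.
Qed.

Lemma dform_ge0 : 0 <= dform g g.
Proof.
rewrite -(pmulr_rge0 _ (ltr0n R 2)) dform_sqr.
by apply: sumr_ge0 => x _; apply: sumr_ge0 => y _; rewrite mulr_ge0 // sqr_ge0.
Qed.

Lemma inner1_Pmul : inner (Pmul g) (fun=> 1) = inner g (fun=> 1).
Proof.
rewrite inner_Pmul exchange_big; apply: eq_bigr => y _.
by under eq_bigr do rewrite mu_sym mulr1 -(mulr1 (g y)); rewrite sum_mu_ball_enum_mulr.
Qed.

Lemma energy_dform : energy mu g = (dform g g)%:E.
Proof.
have fin_B := ball_finite M.
rewrite /energy (@esum_setT_fset _ _ (fun p => mu p.1 p.2 * (g p.1 - g p.2) ^+ 2)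
   (ball M `*` ball M)) //.
- rewrite -EFinM; congr (_%:E).
  rewrite -fsbig_finite; last exact: finite_setX.
  rewrite -(@pair_fsbig _ _ _ _ _ (ball M) (ball M) (fun x y => mu x y * (g x - g y) ^+ 2)) //.
  rewrite fsbig_finite //; under eq_bigr do rewrite fsbig_finite //.
  by rewrite -dform_sqr; field.
- exact: finite_setX.
- by move=> p; rewrite mulr_ge0 // sqr_ge0.
move=> [x y] /= notB; have [xy|/nadj_mu_eq0 ->] := boolP (adj mu x y); last by rewrite mul0r.
have [->|gxy] := eqVneq (g x) (g y); first by rewrite subrr expr0n /= mulr0.
exfalso; apply: notB.
have ball_n : ball n `<=` ball M := ball_mono (ltnW lt_nM).
have ball_Sn : ball n.+1 `<=` ball M := ball_mono lt_nM.
have [gx0|/g_supp Bx] := eqVneq (g x) 0.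
  have /g_supp By : g y != 0 by rewrite -gx0 eq_sym.
  by split; [apply: ball_Sn (ball_adj By _); rewrite adj_sym | exact: ball_n By].
by split; [exact: ball_n Bx | exact: ball_Sn (ball_adj Bx xy)].
Qed.

Lemma sqr_sub_le_resist x r : (resist mu rho x <= r%:E)%E -> 0 <= r ->
  (g rho - g x) ^+ 2 <= r * dform g g.
Proof.
move=> le_resist r_ge0; have [form_gt0|] := ltrP 0 (dform g g).
  have : ((`|g rho - g x| ^+ 2 / fine (energy mu g))%:E <= resist mu rho x)%E.
    apply: ereal_sup_ubound; exists g => //.
    by split; rewrite energy_dform ?ltry ?lte_fin.
  move=> /le_trans /(_ le_resist); rewrite energy_dform /= lee_fin real_normK ?num_real //.
  by rewrite ler_pdivrMr.
move=> form_le0; have form0 : dform g g = 0 by apply/eqP; rewrite eq_le form_le0 dform_ge0.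
by rewrite (@energy_eq0_const g rho x) ?energy_dform ?form0 // subrr expr0n /= mulr0.
Qed.

End Supported.

Lemma inner1_heat n : (n <= M)%N -> inner (heat n) (fun=> 1) = 1.
Proof.
elim: n => [|n IH] le_nM; first by rewrite inner_heat0.
rewrite -Pmul_heat; last by lia.
by rewrite (@inner1_Pmul _ n) ?IH //; try lia; exact: heat_neq0_ball.
Qed.

Lemma Vball_le_inv f n (d r : R) : (forall x, f x != 0 -> ball n x) -> (n < M)%N ->
  (forall x, 0 <= f x) -> inner f (fun=> 1) = 1 -> 0 < d ->
  (forall x, (resist mu rho x <= r%:E)%E -> d <= f x) -> (Vball mu rho r <= d^-1%:E)%E.
Proof.
move=> f_supp lt_nM f_ge0 mass1 d_gt0 level.
rewrite /Vball /nu /esum; apply: ge_ereal_sup => _ [A [finA A_sub] <-].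
rewrite fsbig_finite // sumEFin lee_fin -(ler_pM2l d_gt0) mulfV ?gt_eqF // mulr_sumr.
apply: (@le_trans _ _ (\sum_(x <- fset_set A) f x * 1 * muv mu x)).
  rewrite big_seq [X in _ <= X]big_seq; apply: ler_sum => x.
  rewrite in_fset_set // inE => /A_sub /= Ax.
  by rewrite mulr1 ler_wpM2r // ?level // ltW // muv_gt0.
rewrite -[X in _ <= X]mass1 /inner; apply: ler_sum_uniq_supp; rewrite ?fset_uniq //.
  by move=> x; rewrite mulr1 mulr_ge0 // ltW // muv_gt0.
move=> x x_notin; have -> : f x = 0; last by rewrite !mul0r.
apply: contra_not_eq (negP x_notin) => /f_supp Bx.
by apply: mem_ball_enum; apply: ball_mono Bx; apply: ltnW.
Qed.

Lemma resist_level_bound f n (c r : R) : (forall x, f x != 0 -> ball n x) -> (n < M)%N ->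
  (forall x, 0 <= f x) -> inner f (fun=> 1) = 1 -> 0 < c -> 0 < r ->
  (c%:E < r%:E * Vball mu rho r)%E -> f rho - Num.sqrt (r * dform f f) <= r / c.
Proof.
move=> f_supp lt_nM f_ge0 mass1 c_gt0 r_gt0 lt_volume.
set s := Num.sqrt (r * dform f f).
have [d_le0|d_gt0] := lerP (f rho - s) 0.
  by apply: le_trans d_le0 _; rewrite divr_ge0 // ltW.
set d := f rho - s in d_gt0 *.
have level x : (resist mu rho x <= r%:E)%E -> d <= f x.
  move=> /(sqr_sub_le_resist f_supp lt_nM) /(_ (ltW r_gt0)) /ler_wsqrtr.
  rewrite sqrtr_sqr -/s => le_norm; have := ler_norm (f rho - f x); rewrite /d; lra.
have : (c%:E < (r / d)%:E)%E.
  apply: lt_le_trans lt_volume _; rewrite EFinM; apply: lee_wpmul2l.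
    by rewrite lee_fin ltW.
  exact: Vball_le_inv f_supp lt_nM f_ge0 mass1 d_gt0 level.
rewrite lte_fin ltr_pdivlMr // => lt_cd.
by rewrite ler_pdivlMr // mulrC ltW.
Qed.

End Truncation.

Lemma pker_diag n : pker mu n rho rho = heat n rho.
Proof. by rewrite /pker /heat /nu esum_set1 //= lee_fin ltW // muv_gt0. Qed.

Lemma qker_pair_sum m : qker mu (2 * m) rho rho = pair_sum (heat^~ rho) m / 2.
Proof. by rewrite /qker !pker_diag mulrC. Qed.

(* The energy of (u_j + u_(j+1)) / 2 is the difference of consecutive pair sums divided by 4. *)
Lemma pair_sum_heat_decr j : pair_sum (heat^~ rho) j.+1 <= pair_sum (heat^~ rho) j.
Proof.
have : 0 <= dform (4 * j + 4) (window_avg j 2) (window_avg j 2).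
  by apply: (dform_ge0 (@window_avg_neq0_ball j 2)); lia.
rewrite dform_window_avg; last by lia.
rewrite pmulr_rge0 ?invr_gt0 ?exprn_gt0 ?ltr0n // !big_ord_recr !big_ord0 /= !add0r.
have -> : (j + 0 + (j + 0) = 2 * j)%N by lia.
have -> : (j + 0 + (j + 1) = (2 * j).+1)%N by lia.
have -> : (j + 1 + (j + 0) = (2 * j).+1)%N by lia.
have -> : (j + 1 + (j + 1) = 2 * j.+1)%N by lia.
have -> : ((2 * j).+2 = 2 * j.+1)%N by lia.
rewrite /pair_sum; lra.
Qed.

Definition heat_window m := window_avg (2 * (m - m./2)) (2 * (m./2).+1).

Lemma heat_window_neq0_ball m x : heat_window m x != 0 -> ball (2 * m + 2) x.
Proof.
move=> /window_avg_neq0_ball; apply: ball_mono.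
by have := double_half_bounds m; lia.
Qed.

Lemma inner1_heat_window M m : (2 * m + 2 <= M)%N -> inner M (heat_window m) (fun=> 1) = 1.
Proof.
move=> le_M; have := double_half_bounds m => half_m.
rewrite /heat_window /window_avg (inner_suml _ _ _ (fun i => heat (2 * (m - m./2) + i))).
rewrite (eq_bigr (fun=> 1)) => [|i _]; last by rewrite inner1_heat //; have := ltn_ord i; lia.
by rewrite sumr_const card_ord mulVf // pnatr_eq0 muln_eq0.
Qed.

Lemma qker_le_heat_window m : qker mu (2 * m) rho rho <= heat_window m rho.
Proof.
have half_m := double_half_bounds m.
have decr j (_ : (j < 2 * m)%N) := pair_sum_heat_decr j.
have sum_ge := @window_sum_ge _ _ _ decr (m - m./2) (m./2).+1 m (leq_pmull _ (isT : 0 < 2)%N) _.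
rewrite qker_pair_sum /heat_window /window_avg ler_pdivlMl ?ltr0n ?muln_gt0 //.
apply: le_trans (sum_ge _); last by lia.
suff -> : (2 * (m./2).+1)%:R * (pair_sum (heat^~ rho) m / 2) =
          (m./2).+1%:R * pair_sum (heat^~ rho) m :> R by [].
by rewrite natrM; field.
Qed.

Lemma dform_heat_window_le M m : (1 <= m)%N -> (4 * m + 4 <= M)%N ->
  dform M (heat_window m) (heat_window m) <= qker mu (2 * m) rho rho / m%:R.
Proof.
move=> m_ge1 le_M; have half_m := double_half_bounds m.
have decr j (_ : (j < 2 * m)%N) := pair_sum_heat_decr j.
have sum_le := @window_telescope_le _ _ _ decr (2 * (m - m./2)) (m./2).+1 m (heat_ge0^~ rho).
rewrite /heat_window dform_window_avg; last by lia.
rewrite qker_pair_sum; set P := pair_sum _ m; set K : R := (m./2).+1%:R.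
have P_ge0 : 0 <= P by rewrite addr_ge0 // heat_ge0.
have K_gt0 : 0 < K by rewrite ltr0n.
have m_gt0 : (0 < m%:R :> R) by rewrite ltr0n.
have m_le_2K : m%:R <= 2 * K by rewrite -natrM ler_nat; lia.
apply: le_trans (_ : (2 * K)^-2 * (K * P) <= _).
  by rewrite natrM ler_wpM2l ?invr_ge0 ?exprn_ge0 ?mulr_ge0 // sum_le //; lia.
have -> : (2 * K)^-2 * (K * P) = P / 2 / m%:R * (m%:R / (2 * K)) by field; rewrite !gt_eqF.
apply: ler_piMr; first by rewrite !divr_ge0.
by rewrite ler_pdivrMr ?mul1r // mulr_gt0.
Qed.

Lemma qker_le_of_volume m r : (1 <= m)%N -> 0 < r ->
  (m%:R%:E < r%:E * Vball mu rho r)%E -> qker mu (2 * m) rho rho <= 3 * r / m%:R.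
Proof.
move=> m_ge1 r_gt0 lt_volume.
pose M := (4 * m + 4)%N.
have m_gt0 : (0 < m%:R :> R) by rewrite ltr0n.
have lt_M : (2 * m + 2 < M)%N by rewrite /M; lia.
have f_supp := @heat_window_neq0_ball m.
have level := resist_level_bound f_supp lt_M (window_avg_ge0 _ _)
  (inner1_heat_window (ltnW lt_M)) m_gt0 r_gt0 lt_volume.
have form_le := dform_heat_window_le m_ge1 (leqnn M).
have form_ge0 := dform_ge0 f_supp lt_M.
rewrite -mulrA.
apply: (@quadratic_bound _ _ (Num.sqrt (r * dform M (heat_window m) (heat_window m)))).
- by rewrite divr_gt0.
- by have := qker_le_heat_window m; lra.
rewrite sqr_sqrtr; last by rewrite mulr_ge0 // ltW.
by rewrite mulrAC -mulrA ler_wpM2l // ltW.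
Qed.

Lemma hinv_ge0 m : 0 <= m -> (0 <= hinv mu rho m)%E.
Proof. by move=> m_ge0; apply: ereal_sup_ubound; exists 0 => //=; rewrite /hfun mul0e lee_fin. Qed.

Lemma qker_le_of_hinv_lt m r : (1 <= m)%N -> (hinv mu rho m%:R < r%:E)%E ->
  qker mu (2 * m) rho rho <= 3 * r / m%:R.
Proof.
move=> m_ge1 lt_r; have r_gt0 : 0 < r.
  by rewrite -lte_fin; apply: le_lt_trans (hinv_ge0 (ler0n R m)) lt_r.
apply: qker_le_of_volume => //; rewrite ltNge; apply/negP => le_h.
have : (r%:E <= hinv mu rho m%:R)%E by apply: ereal_sup_ubound; exists r.
by rewrite leNgt lt_r.
Qed.

End WeightedGraph.

Theorem lemma4p3 (R : realType) (V : choiceType) (mu : V -> V -> R) (rho : V)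
  (Hg : weighted_graph mu) (H2 : exists x y : V, x <> y) (m : nat) (Hm : (1 <= m)%N) :
  ((qker mu (2 * m)%N rho rho)%:E <= 3%:E * hinv mu rho m%:R / m%:R%:E)%E.
Proof.
have m_gt0 : (0 < m%:R :> R) by rewrite ltr0n.
have bound r : (hinv mu rho m%:R < r%:E)%E -> qker mu (2 * m) rho rho <= 3 * r / m%:R.
  exact: qker_le_of_hinv_lt.
move: (hinv_ge0 mu rho (ler0n R m)) bound.
case: (hinv mu rho m%:R) => [h| |] // h_ge0 bound.
  rewrite inver (gt_eqF m_gt0) -!EFinM lee_fin; apply/ler_addgt0Pr => e e_gt0.
  have := bound (h + e * m%:R / 3); rewrite lte_fin ltrDl divr_gt0 ?mulr_gt0 //.
  move=> /(_ isT) /le_trans; apply; rewrite le_eqVlt; apply/orP; left; apply/eqP.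
  by field; rewrite gt_eqF.
rewrite inver (gt_eqF m_gt0) mulry gtr0_sg // mul1e mulyr gtr0_sg ?invr_gt0 // mul1e.
exact: leey.
Qed.
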